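(* Let $K\ge2$, let $\mathbf{W}$ be a $K\times K$ invertible row-stochastic matrix, let $\mathbf{p}$ be a probability vector with all entries positive, and let $i\ne j$ in $[K]$. Let $\boldsymbol{\Pi}_{\{i,j\}}$ be the permutation matrix that swaps the $i$-th and $j$-th entries. Then the function $$[0,1]\to\mathbb{R}_+,\qquad \lambda\mapsto\alpha_{f\text{-DIV}}\big(\lambda\mathbf{p}+(1-\lambda)\mathbf{p}\boldsymbol{\Pi}_{\{i,j\}},\mathbf{W}\big)$$ is convex.
   Context: $\boldsymbol{\Phi}(\mathbf{W})=\mathbf{W}(\mathbf{W}^{-1}\odot\mathbf{W}^{-1})$ with $\odot$ the entrywise product. For a probability vector $\mathbf{p}$ with positive entries, $\alpha_{f\text{-DIV}}(\mathbf{p},\mathbf{W})=\frac{\mathbf{p}\boldsymbol{\Phi}(\mathbf{W})\mathbf{p}^{-\top}-1}{K-1}=\frac{1}{K-1}\Big(\sum_{k,\ell}\frac{p_k}{p_\ell}\Phi_{k,\ell}(\mathbf{W})-1\Big)$, where $\mathbf{p}^{-\top}$ is the column vector of entrywise reciprocals of $\mathbf{p}$ (this is the paper's closed form for the limiting normalized $f$-divergence loss). *)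

From mathcomp Require Import all_boot all_order all_algebra all_fingroup.
Set Implicit Arguments. Unset Strict Implicit. Unset Printing Implicit Defensive.
Import Order.TTheory GRing.Theory Num.Theory.
Local Open Scope ring_scope.

Definition Phi (R : fieldType) (K : nat) (W : 'M[R]_K) : 'M[R]_K :=
  W *m map2_mx (fun a b => a * b) (invmx W) (invmx W).

Definition alpha_fdiv (R : fieldType) (K : nat) (p : 'rV[R]_K) (W : 'M[R]_K) : R :=
  ((\sum_(k < K) \sum_(l < K) p 0 k / p 0 l * Phi W k l) - 1) / (K%:R - 1).

Definition row_stochastic (R : numDomainType) (K : nat) (W : 'M[R]_K) : Prop :=
  (forall k l, 0 <= W k l) /\ (forall k, \sum_(l < K) W k l = 1).

Definition prob_vec_pos (R : numDomainType) (K : nat) (p : 'rV[R]_K) : Prop :=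
  (forall k, 0 < p 0 k) /\ \sum_(k < K) p 0 k = 1.

Definition convex_on_01 (R : realFieldType) (f : R -> R) : Prop :=
  forall x y t : R, 0 <= x <= 1 -> 0 <= y <= 1 -> 0 <= t <= 1 ->
    f (t * x + (1 - t) * y) <= t * f x + (1 - t) * f y.

(* The swapped mixture q(λ) = λ p + (1 - λ) p Π is affine in λ, so alpha is an
   increasing affine function of a nonnegative combination (weights Phi_{k,l}(W) >= 0,
   as W >= 0) of ratios q_k(λ) / q_l(λ) of affine functions with positive denominator.
   Such a ratio a/b is convex when (b1 - b0) (a0 b1 - a1 b0) >= 0 for its endpoint
   values; for a transposition this quantity is 0 (l fixed, or k = l), (p_i - p_j)^2 p_k
   (k fixed) or (p_i - p_j)^2 (p_i + p_j) (k, l swapped). *)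
From mathcomp Require Import all_boot all_order all_algebra all_fingroup.
From mathcomp Require Import ring lra.
Set Implicit Arguments.
Unset Strict Implicit.
Unset Printing Implicit Defensive.
Import Order.TTheory GRing.Theory Num.Theory.
Local Open Scope ring_scope.

Section ConvexOn01.
Variable R : realFieldType.
Implicit Types (f : R -> R) (a b t : R).

Lemma eq_convex_on_01 f g : f =1 g -> convex_on_01 f -> convex_on_01 g.
Proof. by move=> fg cvx x y t hx hy ht; rewrite -!fg; apply: cvx. Qed.

Lemma convex_on_01_sum (I : finType) (F : I -> R -> R) :
  (forall i, convex_on_01 (F i)) -> convex_on_01 (fun x => \sum_(i : I) F i x).
Proof.
move=> cvx x y t hx hy ht; rewrite !mulr_sumr -big_split /=.
by apply: ler_sum => i _; apply: cvx.
Qed.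

Lemma convex_on_01_scale f a :
  0 <= a -> convex_on_01 f -> convex_on_01 (fun x => f x * a).
Proof.
move=> a0 cvx x y t hx hy ht; rewrite !mulrA -mulrDl.
exact: ler_wpM2r (cvx x y t hx hy ht).
Qed.

Lemma convex_on_01_subr f a : convex_on_01 f -> convex_on_01 (fun x => f x - a).
Proof.
move=> cvx x y t hx hy ht.
have := cvx x y t hx hy ht; lra.
Qed.

Lemma mix_gt0 t a b : 0 <= t <= 1 -> 0 < a -> 0 < b -> 0 < t * a + (1 - t) * b.
Proof.
move=> /andP[t0 t1] a0 b0; have [t_gt0|t_le0] := ltrP 0 t.
  by rewrite ltr_wpDr ?mulr_gt0 // mulr_ge0 ?subr_ge0 // ltW.
have -> : t = 0 by lra.
by rewrite mul0r add0r subr0 mul1r.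
Qed.

Lemma mix_divr_le (t ax ay bx by' : R) :
  0 <= t <= 1 -> 0 < bx -> 0 < by' -> 0 <= (by' - bx) * (ax * by' - ay * bx) ->
  (t * ax + (1 - t) * ay) / (t * bx + (1 - t) * by') <=
  t * (ax / bx) + (1 - t) * (ay / by').
Proof.
move=> t01 bx0 by0 det_ge0.
have m0 : 0 < t * bx + (1 - t) * by' by exact: mix_gt0.
rewrite -subr_ge0.
have -> : t * (ax / bx) + (1 - t) * (ay / by') -
    (t * ax + (1 - t) * ay) / (t * bx + (1 - t) * by') =
    t * (1 - t) * ((by' - bx) * (ax * by' - ay * bx)) /
      (bx * by' * (t * bx + (1 - t) * by')).
  by field; rewrite ?gt_eqF ?mulr_gt0.
move: t01 => /andP[t0 t1].
apply: divr_ge0; last by rewrite ltW ?mulr_gt0.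
by rewrite mulr_ge0 // mulr_ge0 ?subr_ge0.
Qed.

Lemma convex_on_01_ratio (a1 a0 b1 b0 : R) :
  0 < b1 -> 0 < b0 -> 0 <= (b1 - b0) * (a0 * b1 - a1 * b0) ->
  convex_on_01 (fun x => (x * a1 + (1 - x) * a0) / (x * b1 + (1 - x) * b0)).
Proof.
move=> b1_gt0 b0_gt0 det_ge0 x y t hx hy ht.
have affine c1 c0 : (t * x + (1 - t) * y) * c1 + (1 - (t * x + (1 - t) * y)) * c0 =
    t * (x * c1 + (1 - x) * c0) + (1 - t) * (y * c1 + (1 - y) * c0) by ring.
rewrite !affine; apply: mix_divr_le; rewrite ?mix_gt0 //.
have -> : ((y * b1 + (1 - y) * b0) - (x * b1 + (1 - x) * b0)) *
    ((x * a1 + (1 - x) * a0) * (y * b1 + (1 - y) * b0) -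
     (y * a1 + (1 - y) * a0) * (x * b1 + (1 - x) * b0)) =
    (y - x) ^+ 2 * ((b1 - b0) * (a0 * b1 - a1 * b0)) by ring.
by rewrite mulr_ge0 ?sqr_ge0.
Qed.

End ConvexOn01.

Lemma tperm_ratio_det_ge0 (R : realFieldType) (T : finType) (v : T -> R)
    (i j k l : T) : (forall x, 0 <= v x) ->
  0 <= (v l - v (tperm i j l)) * (v (tperm i j k) * v l - v k * v (tperm i j l)).
Proof.
move=> v_ge0; wlog -> : i j / l = i.
  move=> hw; have [l_i|li] := eqVneq l i; first exact: hw.
  have [l_j|lj] := eqVneq l j; first by rewrite tpermC; apply: hw.
  by rewrite tpermD 1?eq_sym // subrr mul0r.
rewrite tpermL; case: (tpermP i j k) => [->|->|_ _].
- by rewrite [v j * _]mulrC subrr mulr0.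
- have -> : (v i - v j) * (v i * v i - v j * v j) = (v i + v j) * (v i - v j) ^+ 2.
    by ring.
  by rewrite mulr_ge0 ?addr_ge0 ?sqr_ge0.
- have -> : (v i - v j) * (v k * v i - v k * v j) = v k * (v i - v j) ^+ 2 by ring.
  by rewrite mulr_ge0 ?sqr_ge0.
Qed.

Lemma Phi_ge0 (R : realFieldType) (K : nat) (W : 'M[R]_K) k l :
  (forall a b, 0 <= W a b) -> 0 <= Phi W k l.
Proof.
move=> W_ge0; rewrite /Phi mxE; apply: sumr_ge0 => m _.
by rewrite mxE mulr_ge0 // -expr2 sqr_ge0.
Qed.

Theorem lemma11 (R : realFieldType) (K : nat) (hK : (2 <= K)%N)
  (W : 'M[R]_K) (p : 'rV[R]_K) (i j : 'I_K) :
  W \in unitmx -> row_stochastic W -> prob_vec_pos p -> i != j ->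
  convex_on_01 (fun lam : R =>
    alpha_fdiv (lam *: p + (1 - lam) *: (p *m perm_mx (tperm i j))) W).
Proof.
move=> _ [W_ge0 _] [p_gt0 _] _.
have mixE lam k : (lam *: p + (1 - lam) *: (p *m perm_mx (tperm i j))) 0 k =
    lam * p 0 k + (1 - lam) * p 0 (tperm i j k).
  by rewrite -[perm_mx _]/(tperm_mx i j) -xcolE !mxE.
rewrite /alpha_fdiv; apply: convex_on_01_scale.
  by rewrite invr_ge0 subr_ge0 ler1n ltnW.
apply/convex_on_01_subr/convex_on_01_sum => k; apply: convex_on_01_sum => l.
apply: convex_on_01_scale; first exact: Phi_ge0.
have det_ge0 := tperm_ratio_det_ge0 i j k l (fun x => ltW (p_gt0 x)).
apply: (eq_convex_on_01 _ (convex_on_01_ratio (p_gt0 _) (p_gt0 _) det_ge0)) => lam.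
by rewrite !mixE.
Qed.
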